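(* Let $X$ be a connected metric space, $\mathcal M=\{M_1,\dots,M_n\}\subset\mathcal P^f_{\mathrm{Cl}}(X)$, $\Sigma(\mathcal M)\neq\emptyset$ and $d=(d_1,\dots,d_n)\in\Omega(\mathcal M)$. Then there exists $i$ with $d_i=\sup_{x\in K_d}|x\,M_i|$.
   Context: For a metric space $X$, $p\in X$, $A\subset X$: $|p\,A|=\inf_{a\in A}|p\,a|$ ($=\infty$ if $A=\emptyset$); for $0\le r<\infty$, $B_r(A)=\{p:|p\,A|\le r\}$. For nonempty $A,B$, $d_H(A,B)=\max\{\sup_{a\in A}|a\,B|,\sup_{b\in B}|b\,A|\}\in[0,\infty]$. $\mathcal P_{\mathrm{Cl}}(X)$ is the set of nonempty closed subsets of $X$ with $d_H$. A finiteness class of $\mathcal P_{\mathrm{Cl}}(X)$ is an equivalence class of the relation $A\sim B\iff d_H(A,B)<\infty$; $\mathcal P^f_{\mathrm{Cl}}(X)$ denotes a fixed finiteness class. For finite $\mathcal M=\{M_1,\dots,M_n\}\subset\mathcal P^f_{\mathrm{Cl}}(X)$, set $S_{\mathcal M}(Y)=\sum_{i=1}^n d_H(Y,M_i)$ for $Y\in\mathcal P^f_{\mathrm{Cl}}(X)$; $\Sigma(\mathcal M)$ is the set of all minimizers of $S_{\mathcal M}$ over $\mathcal P^f_{\mathrm{Cl}}(X)$. For $K\in\Sigma(\mathcal M)$, $d(K)=(d_H(K,M_1),\dots,d_H(K,M_n))$; $\Omega(\mathcal M)=\{d(K):K\in\Sigma(\mathcal M)\}$; for $d=(d_1,\dots,d_n)\in\Omega(\mathcal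 M)$, $\Sigma_d(\mathcal M)=\{K\in\Sigma(\mathcal M):d(K)=d\}$, partially ordered by inclusion; and $K_d=\bigcap_{i=1}^n B_{d_i}(M_i)$. *)

From HB Require Import structures.
From mathcomp Require Import all_boot all_order all_algebra.
From mathcomp Require Import all_classical all_reals ereal.
Set Implicit Arguments. Unset Strict Implicit. Unset Printing Implicit Defensive.
Import Order.TTheory GRing.Theory Num.Theory.
Local Open Scope classical_set_scope.
Local Open Scope ring_scope.

Section MetricDefs.
Variables (R : realType) (T : Type) (dist : T -> T -> R).

Definition is_metric : Prop :=
  (forall x y, 0 <= dist x y) /\
  (forall x y, dist x y = 0 <-> x = y) /\
  (forall x y, dist x y = dist y x) /\
  (forall x y z, dist x z <= dist x y + dist y z).

Definition mopen (U : set T) : Prop :=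
  forall x, U x -> exists2 e : R, 0 < e & forall y, dist x y < e -> U y.

Definition mclosed (A : set T) : Prop := mopen (~` A).

Definition mconnected : Prop :=
  forall U V : set T, mopen U -> mopen V -> U `&` V = set0 -> U `|` V = setT ->
    U = set0 \/ V = set0.

(* |p A| = inf_{a in A} |p a|  (= +oo if A is empty) *)
Definition ptdist (p : T) (A : set T) : \bar R :=
  ereal_inf [set (dist p a)%:E | a in A].

Definition mball (r : R) (A : set T) : set T :=
  [set p | (ptdist p A <= r%:E)%E].

Definition hausdorff (A B : set T) : \bar R :=
  maxe (ereal_sup [set ptdist a B | a in A]) (ereal_sup [set ptdist b A | b in B]).

Definition PCl (A : set T) : Prop := A !=set0 /\ mclosed A.

(* the finiteness class of C0 in P_Cl(X) *)
Definition fclass (C0 : set T) : set (set T) :=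
  [set Y | PCl Y /\ (hausdorff Y C0 < +oo)%E].

Variables (C0 : set T) (n : nat) (M : 'I_n -> set T).

Definition SM (Y : set T) : \bar R := (\sum_(i < n) hausdorff Y (M i))%E.

Definition Sigma : set (set T) :=
  [set K | fclass C0 K /\ forall Y, fclass C0 Y -> (SM K <= SM Y)%E].

Definition Omega (d : 'I_n -> R) : Prop :=
  exists2 K, Sigma K & forall i, hausdorff K (M i) = (d i)%:E.

Definition Kd (d : 'I_n -> R) : set T := [set p | forall i, mball (d i) (M i) p].

End MetricDefs.

From HB Require Import structures.
From mathcomp Require Import all_boot all_order all_algebra.
From mathcomp Require Import all_classical all_reals ereal.
From mathcomp Require Import lra.
Import Order.TTheory GRing.Theory Num.Theory.
Local Open Scope classical_set_scope.
Local Open Scope ring_scope.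

(* Suppose every sup_{x in K_d} |x M_i| is strictly below d_i. Then points
   within distance min_i (d_i - sup_i) of a point of K_d stay in K_d, and
   points that close to a point outside K_d stay outside, so K_d is clopen.
   It contains a minimizer K, hence by connectedness K_d = X. But then X lies
   in the finiteness class and d_H(X, M_i) = sup_{x in X} |x M_i| < d_i for
   every i, so S_M(X) < S_M(K), contradicting the minimality of K. *)

Lemma lte_fin_between {R : realType} (x : \bar R) (r : R) :
  (x < r%:E)%E -> exists s : R, (x <= s%:E)%E /\ s < r.
Proof.
case: x => [s | | ] //; first by exists s.
by move=> _; exists (r - 1); rewrite leNye ltrBlDr ltrDl.
Qed.

Section PointSetDistance.
Context {R : realType} {T : Type} {dist : T -> T -> R}.
Hypothesis hm : is_metric dist.

Lemma ptdist_ge0 p A : (0 <= ptdist dist p A)%E.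
Proof. by apply/ereal_infP => _ [a Aa <-]; rewrite lee_fin; apply: hm.1. Qed.

Lemma ptdist_le_dist p {A a} : A a -> (ptdist dist p A <= (dist p a)%:E)%E.
Proof. by move=> Aa; apply: ereal_inf_lbound; exists a. Qed.

Lemma ptdist_mem p A : A p -> ptdist dist p A = 0%E.
Proof.
move=> Ap; apply/eqP; rewrite eq_le ptdist_ge0 andbT.
by apply: le_trans (ptdist_le_dist p Ap) _; rewrite (proj2 (hm.2.1 p p) erefl).
Qed.

Lemma ptdist_triangle y x A :
  (ptdist dist y A <= (dist y x)%:E + ptdist dist x A)%E.
Proof.
rewrite -leeBlDl //; apply/ereal_infP => _ [a Aa <-].
rewrite leeBlDl //; apply: le_trans (ptdist_le_dist y Aa) _.
by rewrite -EFinD lee_fin; apply: hm.2.2.2.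
Qed.

Lemma ptdist_le_hausdorff {A} B {a} :
  A a -> (ptdist dist a B <= hausdorff dist A B)%E.
Proof.
by move=> Aa; rewrite /hausdorff le_max ereal_sup_ubound //; exists a.
Qed.

Lemma ptdist_le_add_hausdorff x A B h :
  (forall a, A a -> ptdist dist a B <= h%:E)%E ->
  (ptdist dist x B <= ptdist dist x A + h%:E)%E.
Proof.
move=> hA; rewrite -leeBlDr //; apply/ereal_infP => _ [a Aa <-].
rewrite leeBlDr //; apply: le_trans (ptdist_triangle x a B) _.
by rewrite leeD2l // hA.
Qed.

Lemma hausdorff_setT_le A (r : \bar R) : (0 <= r)%E ->
  (forall x, ptdist dist x A <= r)%E -> (hausdorff dist setT A <= r)%E.
Proof.
move=> r_ge0 hA; rewrite /hausdorff ge_max; apply/andP; split.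
  by apply: ge_ereal_sup => _ [x _ <-].
by apply: ge_ereal_sup => _ [a _ <-]; rewrite ptdist_mem.
Qed.

Lemma mball_of_near r s A x y : (ptdist dist x A <= s%:E)%E ->
  dist x y <= r - s -> mball dist r A y.
Proof.
move=> hx hxy; rewrite /mball /=; apply: le_trans (ptdist_triangle y x A) _.
apply: le_trans (leeD2l _ hx) _.
by rewrite -EFinD lee_fin (hm.2.2.1 y x); lra.
Qed.

Lemma mconnected_uniform_eq_setT {A : set T} {e} : mconnected dist ->
  0 < e -> (forall x y, A x -> dist x y < e -> A y) -> A !=set0 -> A = setT.
Proof.
move=> hconn e_gt0 hA [a Aa].
have oA : mopen dist A by move=> x Ax; exists e => // y; apply: hA.
have oCA : mopen dist (~` A).
  move=> x nAx; exists e => // y hxy Ay.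
  by apply/nAx/(hA y) => //; rewrite hm.2.2.1.
case: (hconn _ _ oA oCA (setICr _) (setUCr _)) => hE.
  by have : (set0 : set T) a by rewrite -hE.
apply/seteqP; split => // x _; apply: contrapT => nAx.
by rewrite -[False]/(set0 x) -hE.
Qed.

Lemma fclass_setT {C0 M0 r} : fclass dist C0 M0 ->
  (forall x, ptdist dist x M0 <= r%:E)%E -> fclass dist C0 setT.
Proof.
move=> [[[m0 Mm0] _] hM0fin] hr.
set h := hausdorff dist M0 C0 in hM0fin.
have h_ge0 : (0 <= h)%E := le_trans (ptdist_ge0 m0 C0) (ptdist_le_hausdorff _ Mm0).
have hE : h = (fine h)%:E by rewrite fineK // ge0_fin_numE.
have r_ge0 : 0 <= r by rewrite -lee_fin; apply: le_trans (hr m0); apply: ptdist_ge0.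
split; first by split; [exists m0 | move=> x /= []].
apply: (@le_lt_trans _ _ (r + fine h)%:E); last exact: ltey.
apply: hausdorff_setT_le => [|x]; first by rewrite lee_fin addr_ge0 // -lee_fin -hE.
apply: le_trans (ptdist_le_add_hausdorff x M0 C0 (fine h) _) _.
  by move=> a Ma; rewrite -hE; apply: ptdist_le_hausdorff.
by rewrite EFinD leeD2r.
Qed.

Section IntersectionOfBalls.
Context {n : nat} {M : 'I_n -> set T} {d : 'I_n -> R}.

Lemma sub_Kd K : (forall i, hausdorff dist K (M i) <= (d i)%:E)%E ->
  K `<=` Kd dist M d.
Proof. by move=> hK k Kk i; apply: le_trans (hK i); apply: ptdist_le_hausdorff. Qed.

Lemma ereal_sup_ptdist_Kd_le i :
  (ereal_sup [set ptdist dist x (M i) | x in Kd dist M d] <= (d i)%:E)%E.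
Proof. by apply: ge_ereal_sup => _ [x Kx <-]; apply: Kx. Qed.

Lemma Kd_uniform {s : 'I_n -> R} :
  (forall i x, Kd dist M d x -> ptdist dist x (M i) <= (s i)%:E)%E ->
  (forall i, s i < d i) ->
  exists2 e, 0 < e & forall x y, Kd dist M d x -> dist x y < e -> Kd dist M d y.
Proof.
move=> hs s_lt; exists (\big[Num.min/1]_(i < n) (d i - s i)).
  by apply: lt_bigmin => // i _; rewrite subr_gt0.
move=> x y Kx hxy i; apply: mball_of_near (hs i x Kx) _.
exact/ltW/(lt_le_trans hxy)/bigmin_le.
Qed.

End IntersectionOfBalls.
End PointSetDistance.

Theorem mainTheorem20 (R : realType) (T : Type) (dist : T -> T -> R)
  (C0 : set T) (n : nat) (M : 'I_n -> set T) (d : 'I_n -> R) :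
  is_metric dist -> mconnected dist ->
  PCl dist C0 ->
  (0 < n)%N -> injective M ->
  (forall i, fclass dist C0 (M i)) ->
  Sigma dist C0 M !=set0 ->
  Omega dist C0 M d ->
  exists i : 'I_n,
    (d i)%:E = ereal_sup [set ptdist dist x (M i) | x in Kd dist M d].
Proof.
move=> hm hconn _ n0 _ hM _ [K [fcK Kmin] hKd].
apply: contrapT => hno.
have sup_lt i :
    (ereal_sup [set ptdist dist x (M i) | x in Kd dist M d] < (d i)%:E)%E.
  rewrite lt_neqAle ereal_sup_ptdist_Kd_le andbT.
  by apply/eqP => e; apply: hno; exists i.
have [s hs] := choice (fun i => lte_fin_between _ _ (sup_lt i)).
have s_ub i x : Kd dist M d x -> (ptdist dist x (M i) <= (s i)%:E)%E.
  by move=> Kx; apply: le_trans (hs i).1; apply: ereal_sup_ubound; exists x.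
have KsubKd : K `<=` Kd dist M d by apply: sub_Kd => i; rewrite hKd.
have [k0 Kk0] := fcK.1.1.
have [e e_gt0 he] := Kd_uniform hm s_ub (fun i => (hs i).2).
have KdT : Kd dist M d = setT.
  by apply: (mconnected_uniform_eq_setT hm hconn e_gt0 he); exists k0; apply: KsubKd.
pose i0 : 'I_n := Ordinal n0.
have fcT : fclass dist C0 setT.
  by apply: (fclass_setT hm (hM i0)) => x; apply: s_ub; rewrite KdT.
have := Kmin _ fcT; apply/negP; rewrite -ltNge.
apply: (@le_lt_trans _ _ (\sum_(i < n) s i)%:E).
  rewrite /SM -sumEFin; apply: lee_sum => i _.
  apply: (hausdorff_setT_le hm) => [|x]; last by apply: s_ub; rewrite KdT.
  by apply: le_trans (s_ub i k0 (KsubKd _ Kk0)); apply: ptdist_ge0.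
rewrite /SM (eq_bigr (fun i => (d i)%:E)) // sumEFin lte_fin.
apply: ltr_sum => [|i _]; last exact: (hs i).2.
by apply/hasP; exists i0; rewrite ?mem_index_enum.
Qed.
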